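(* Let $\boldsymbol{A}$ be the adjacency matrix of an undirected graph without self-loops on a finite vertex set $\boldsymbol{V}=\{1,\dots,N\}$. Let $\mathcal{R}_e\subset\boldsymbol{V}$ be a nonempty set of egos, $n_e=|\mathcal{R}_e|$, and $\mathcal{R}_a\subset\boldsymbol{V}\setminus\mathcal{R}_e$ a nonempty set of alters, $n_a=|\mathcal{R}_a|$, where each alter $j\in\mathcal{R}_a$ has a unique recruiting ego $e(j)\in\mathcal{R}_e$ with $A_{j\,e(j)}=1$. Let $\widetilde{\boldsymbol{A}}$ be the observed adjacency matrix, with $\widetilde A_{ij}=\widetilde A_{ji}=1$ if and only if $i\in\mathcal{R}_a$ and $j=e(i)$ (and all other entries $0$). Let the treatment vector $\boldsymbol{Z}\in\{0,1\}^N$ have independent components with $\Pr(Z_i=1)=p_z\,\mathbb{I}\{i\in\mathcal{R}_e\}$ for a known $p_z\in(0,1)$. Define the true and observed exposures $F_i=\mathbb{I}\{\sum_{j\neq i}Z_jA_{ij}>0\}$ and $\widetilde F_i=\mathbb{I}\{\sum_{j\neq i}Z_j\widetilde A_{ij}>0\}$. Each unit $i\in\mathcal{R}_e\cup\mathcal{R}_a$ has fixed (non-random) real potential outcomes $Y_i(z,f)$, $z,f\in\{0,1\}$, and observed outcome $Y_i=\sum_{z,f\in\{0,1\}}Y_i(z,f)\mathbb{I}\{Z_i=z,F_i=f\}$. Define $$IE=\frac1{n_a}\sum_{i\in\mathcal{R}_a}[Y_i(0,1)-Y_i(0,0)],\qquad DE=\frac1{n_e}\sum_{i\in\mathcal{R}_e}[Y_i(1,0)-Y_i(0,0)],$$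 $$\widehat{IE}=\frac1{n_a}\sum_{i\in\mathcal{R}_a}\Big[\frac{\mathbb{I}\{\widetilde F_i=1\}Y_i}{p_z}-\frac{\mathbb{I}\{\widetilde F_i=0\}Y_i}{1-p_z}\Big],\qquad \widehat{DE}=\frac1{n_e}\sum_{i\in\mathcal{R}_e}\Big[\frac{\mathbb{I}\{Z_i=1\}Y_i}{p_z}-\frac{\mathbb{I}\{Z_i=0\}Y_i}{1-p_z}\Big].$$ For $i\in\mathcal{R}_a$ let $\pi_i^a=\Pr(F_i=1)$ and for $i\in\mathcal{R}_e$ let $\pi_i^e=\Pr(F_i=1)$, probabilities taken over $\boldsymbol{Z}$. Then, with expectations over $\boldsymbol{Z}$, $$\mathbb{E}_{\boldsymbol{Z}}[\widehat{IE}]=IE+\frac1{n_a}\sum_{i\in\mathcal{R}_a}\frac{p_z-\pi_i^a}{1-p_z}\,[Y_i(0,1)-Y_i(0,0)],$$ $$\mathbb{E}_{\boldsymbol{Z}}[\widehat{DE}]=DE+\frac1{n_e}\sum_{i\in\mathcal{R}_e}\pi_i^e\Big\{[Y_i(1,1)-Y_i(0,1)]-[Y_i(1,0)-Y_i(0,0)]\Big\}.$$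
   Context: Design-based setting: the network $\boldsymbol{A}$, the sampled sets $\mathcal{R}_e,\mathcal{R}_a$, the recruitment map $e(\cdot)$ and the potential outcomes are all fixed; the only randomness is the treatment assignment $\boldsymbol{Z}$ (all probabilities and expectations are over $\boldsymbol{Z}$, conditional on the sample). The observed network consists of disjoint ego-networks (each ego with the alters it recruited), while the true network $\boldsymbol{A}$ may contain additional ego–ego and alter–ego edges. *)

From mathcomp Require Import all_boot all_order all_algebra.
Set Implicit Arguments. Unset Strict Implicit. Unset Printing Implicit Defensive.
Import Order.TTheory GRing.Theory Num.Theory.
Local Open Scope ring_scope.

Section Egocentric.
Variables (R : realFieldType) (N : nat).
Implicit Types (A : 'I_N -> 'I_N -> bool) (Z : {ffun 'I_N -> bool}).

Definition obs_adj (Ra : {set 'I_N}) (e : 'I_N -> 'I_N) : 'I_N -> 'I_N -> bool :=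
  fun i j => ((i \in Ra) && (j == e i)) || ((j \in Ra) && (i == e j)).

Definition exposure A Z (i : 'I_N) : bool :=
  (0 < \sum_(j < N | j != i) (Z j * A i j))%N.

Definition treat_prob (pz : R) (Re : {set 'I_N}) (i : 'I_N) : R :=
  pz * (i \in Re)%:R.

Definition prZ (pz : R) (Re : {set 'I_N}) Z : R :=
  \prod_(i < N) (if Z i then treat_prob pz Re i else 1 - treat_prob pz Re i).

Definition EZ (pz : R) (Re : {set 'I_N}) (X : {ffun 'I_N -> bool} -> R) : R :=
  \sum_(Z : {ffun 'I_N -> bool}) prZ pz Re Z * X Z.

Definition PrZ (pz : R) (Re : {set 'I_N}) (P : {ffun 'I_N -> bool} -> bool) : R :=
  \sum_(Z : {ffun 'I_N -> bool} | P Z) prZ pz Re Z.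

Definition obs_outcome (Y : 'I_N -> bool -> bool -> R) A Z (i : 'I_N) : R :=
  \sum_(z : bool) \sum_(f : bool) Y i z f * ((Z i == z) && (exposure A Z i == f))%:R.

Definition IE (Ra : {set 'I_N}) (Y : 'I_N -> bool -> bool -> R) : R :=
  (#|Ra|%:R)^-1 * \sum_(i in Ra) (Y i false true - Y i false false).

Definition DE (Re : {set 'I_N}) (Y : 'I_N -> bool -> bool -> R) : R :=
  (#|Re|%:R)^-1 * \sum_(i in Re) (Y i true false - Y i false false).

Definition IE_hat (pz : R) (Ra : {set 'I_N}) (e : 'I_N -> 'I_N)
    (Y : 'I_N -> bool -> bool -> R) A Z : R :=
  (#|Ra|%:R)^-1 * \sum_(i in Ra)
    ((exposure (obs_adj Ra e) Z i == true)%:R * obs_outcome Y A Z i / pz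
     - (exposure (obs_adj Ra e) Z i == false)%:R * obs_outcome Y A Z i / (1 - pz)).

Definition DE_hat (pz : R) (Re : {set 'I_N})
    (Y : 'I_N -> bool -> bool -> R) A Z : R :=
  (#|Re|%:R)^-1 * \sum_(i in Re)
    ((Z i == true)%:R * obs_outcome Y A Z i / pz
     - (Z i == false)%:R * obs_outcome Y A Z i / (1 - pz)).

End Egocentric.

(* Under the Bernoulli design, a statistic that ignores [Z i] is independent of
   [Z i], and every [Z] of positive probability vanishes off the egos.  For an ego
   [i] the true exposure [F i] ignores [Z i], so the inverse-probability weights
   [1/pz] and [1/(1-pz)] recover [E Y_i(1,F_i) - E Y_i(0,F_i)], which is affine
   in [Pr(F_i)].  For an alter [i], [Z i = 0] almost surely and the observed
   exposure is [Z (e i)], which implies [F i] because [e i] is a true neighbour;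
   hence the summand of the estimator is an affine combination of [Z (e i)] and
   [Y_i(0,F_i)], whose expectation involves only [pz] and [Pr(F_i)]. *)
From mathcomp Require Import all_boot all_order all_algebra.
From mathcomp Require Import ring.
Set Implicit Arguments. Unset Strict Implicit. Unset Printing Implicit Defensive.
Import Order.TTheory GRing.Theory Num.Theory.
Local Open Scope ring_scope.

Section FlipExposure.
Variable N : nat.
Local Notation bvec := {ffun 'I_N -> bool}.
Implicit Types (A : 'I_N -> 'I_N -> bool) (Z : bvec) (i j k : 'I_N).

Definition flip i Z : bvec := [ffun j => if j == i then ~~ Z j else Z j].

Lemma flipK i : involutive (flip i).
Proof.
by move=> Z; apply/ffunP => j; rewrite !ffunE; case: eqP => // _; rewrite negbK.
Qed.

Lemma flip_self i Z : flip i Z i = ~~ Z i.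
Proof. by rewrite ffunE eqxx. Qed.

Lemma flip_neq i j Z : j != i -> flip i Z j = Z j.
Proof. by rewrite ffunE => /negbTE ->. Qed.

Lemma exposure_flip A Z i : exposure A (flip i Z) i = exposure A Z i.
Proof.
by rewrite /exposure; congr (0 < _)%N; apply: eq_bigr => j ji; rewrite flip_neq.
Qed.

Lemma exposure_neighbour A Z i k : k != i -> A i k -> Z k -> exposure A Z i.
Proof. by move=> ki Aik Zk; rewrite /exposure (bigD1 k) //= Aik Zk. Qed.

Lemma exposure_obs_adj_alter (Re Ra : {set 'I_N}) (e : 'I_N -> 'I_N) Z i :
  (forall j, j \in Ra -> e j \in Re) -> i \in Ra -> i \notin Re ->
  exposure (obs_adj Ra e) Z i = Z (e i).
Proof.
move=> e_ego iRa iNRe.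
have eii : e i != i by apply: contraNneq iNRe => <-; apply: e_ego.
rewrite /exposure (bigD1 (e i)) //= big1 => [|j /andP [ji jei]].
  by rewrite /obs_adj iRa eqxx addn0; case: (Z (e i)).
rewrite /obs_adj (negbTE jei) andbF /=.
case jRa: (j \in Ra); last by rewrite muln0.
have iej : i != e j by apply: contraNneq iNRe => ->; apply: e_ego.
by rewrite (negbTE iej) muln0.
Qed.

End FlipExposure.

Section BernoulliDesign.
Variables (R : realFieldType) (N : nat) (pz : R) (Re : {set 'I_N}).
Local Notation E := (EZ pz Re).
Local Notation bvec := {ffun 'I_N -> bool}.
Implicit Types (Z : bvec) (X W : bvec -> R) (P : bvec -> bool).

Definition coord_pmf (i : 'I_N) (b : bool) : R :=
  if b then treat_prob pz Re i else 1 - treat_prob pz Re i.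

Definition prZ_off (i : 'I_N) Z : R := \prod_(j < N | j != i) coord_pmf j (Z j).

Lemma sum_prZ : \sum_Z prZ pz Re Z = 1.
Proof.
rewrite /prZ -(bigA_distr_bigA coord_pmf) big1 // => i _.
by rewrite big_bool /coord_pmf /= addrC subrK.
Qed.

Lemma prZ_split i Z : prZ pz Re Z = coord_pmf i (Z i) * prZ_off i Z.
Proof. by rewrite /prZ (bigD1 i). Qed.

Lemma prZ_off_flip i Z : prZ_off i (flip i Z) = prZ_off i Z.
Proof. by apply: eq_bigr => j ji; rewrite flip_neq. Qed.

Lemma prZ_eq0 Z j : j \notin Re -> Z j -> prZ pz Re Z = 0.
Proof.
move=> jNRe Zj.
by rewrite (prZ_split j) /coord_pmf Zj /treat_prob (negbTE jNRe) mulr0 mul0r.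
Qed.

Lemma eq_EZ X W : X =1 W -> E X = E W.
Proof. by move=> eqXW; apply: eq_bigr => Z _; rewrite eqXW. Qed.

Lemma eq_EZ_on_support X W :
  (forall Z, (forall j, j \notin Re -> ~~ Z j) -> X Z = W Z) -> E X = E W.
Proof.
move=> eqXW; apply: eq_bigr => Z _.
case: (pickP [pred j | (j \notin Re) && Z j]) => [j /andP [jNRe Zj] | offRe].
  by rewrite (prZ_eq0 jNRe Zj) !mul0r.
by rewrite eqXW // => j jNRe; apply/negP => Zj; have := offRe j; rewrite /= jNRe Zj.
Qed.

Lemma EZD X W : E (fun Z => X Z + W Z) = E X + E W.
Proof. by rewrite /EZ -big_split; apply: eq_bigr => Z _; rewrite mulrDr. Qed.

Lemma EZMl (c : R) X : E (fun Z => c * X Z) = c * E X.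
Proof. by rewrite /EZ mulr_sumr; apply: eq_bigr => Z _; rewrite mulrCA. Qed.

Lemma EZ_cst (c : R) : E (fun _ => c) = c.
Proof. by rewrite /EZ -mulr_suml sum_prZ mul1r. Qed.

Lemma EZ_sum (S : {set 'I_N}) (F : 'I_N -> bvec -> R) :
  E (fun Z => \sum_(i in S) F i Z) = \sum_(i in S) E (F i).
Proof. by rewrite /EZ exchange_big; apply: eq_bigr => Z _; rewrite mulr_sumr. Qed.

Lemma PrZ_EZ P : PrZ pz Re P = E (fun Z => (P Z)%:R).
Proof.
by rewrite /PrZ /EZ big_mkcond; apply: eq_bigr => Z _; case: (P Z); rewrite ?mulr1 ?mulr0.
Qed.

Lemma EZ_bool_fun P (f : bool -> R) :
  E (fun Z => f (P Z)) = f false + (f true - f false) * PrZ pz Re P.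
Proof.
rewrite (eq_EZ (W := fun Z => f false + (f true - f false) * (P Z)%:R)).
  by rewrite EZD EZ_cst EZMl PrZ_EZ.
by move=> Z; case: (P Z); rewrite /= ?mulr1 ?mulr0 ?addr0 // subrKC.
Qed.

(* Reindexing by [flip i] exchanges the events [Z i] and [~~ Z i] and leaves
   [prZ_off i] unchanged. *)
Lemma EZ_coord_indep i b X : (forall Z, X (flip i Z) = X Z) ->
  E (fun Z => (Z i == b)%:R * X Z) = coord_pmf i b * E X.
Proof.
move=> Xflip.
pose T b := \sum_(Z : bvec | Z i == b) prZ_off i Z * X Z.
have ET c : E (fun Z => (Z i == c)%:R * X Z) = coord_pmf i c * T c.
  rewrite /EZ /T mulr_sumr [RHS]big_mkcond; apply: eq_bigr => Z _.
  rewrite (prZ_split i); case: eqP => [-> | _]; first by rewrite mul1r mulrA.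
  by rewrite mul0r mulr0.
have T_true_false : T true = T false.
  rewrite /T (reindex_inj (inv_inj (flipK i))) /=.
  apply: eq_big => [Z | Z _]; first by rewrite flip_self; case: (Z i).
  by rewrite prZ_off_flip Xflip.
have EX : E X = T true.
  rewrite (eq_EZ (W := fun Z => (Z i == true)%:R * X Z + (Z i == false)%:R * X Z)).
    by rewrite EZD !ET -T_true_false -mulrDl /coord_pmf addrC subrK mul1r.
  by move=> Z; case: (Z i); rewrite /= mul1r mul0r ?addr0 ?add0r.
by rewrite ET EX; case: b; rewrite ?T_true_false.
Qed.

Lemma EZ_coord i : E (fun Z => (Z i)%:R) = treat_prob pz Re i.
Proof.
rewrite (eq_EZ (W := fun Z => (Z i == true)%:R * 1)); last first.
  by move=> Z; rewrite eqb_id mulr1.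
by rewrite EZ_coord_indep // EZ_cst mulr1.
Qed.

End BernoulliDesign.

Lemma obs_outcomeE (R : realFieldType) N (Y : 'I_N -> bool -> bool -> R)
    (A : 'I_N -> 'I_N -> bool) (Z : {ffun 'I_N -> bool}) (i : 'I_N) :
  obs_outcome Y A Z i = Y i (Z i) (exposure A Z i).
Proof.
by rewrite /obs_outcome !big_bool /=; case: (Z i); case: (exposure A Z i) => /=; ring.
Qed.

Section HorvitzThompsonTerms.
Variables (R : realFieldType) (N : nat) (A : 'I_N -> 'I_N -> bool).
Variables (Re Ra : {set 'I_N}) (e : 'I_N -> 'I_N) (pz : R).
Variable Y : 'I_N -> bool -> bool -> R.
Hypotheses (pz_gt0 : 0 < pz) (pz_lt1 : pz < 1).
Local Notation E := (EZ pz Re).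
Local Notation F i := (fun Z => exposure A Z i).

Let pz_neq0 : pz != 0. Proof. by rewrite gt_eqF. Qed.
Let pzC_neq0 : 1 - pz != 0. Proof. by rewrite subr_eq0 eq_sym lt_eqF. Qed.

Definition ipw_contrast (D : bool) (y : R) : R :=
  (D == true)%:R * y / pz - (D == false)%:R * y / (1 - pz).

Lemma EZ_DE_hat_term i : i \in Re ->
  E (fun Z => ipw_contrast (Z i) (obs_outcome Y A Z i))
  = (Y i true false - Y i false false)
    + PrZ pz Re (F i) * ((Y i true true - Y i false true)
                         - (Y i true false - Y i false false)).
Proof.
move=> iRe.
rewrite (eq_EZ pz Re (W := fun Z => pz^-1 * ((Z i == true)%:R * Y i true (F i Z))
                     + (- (1 - pz)^-1) * ((Z i == false)%:R * Y i false (F i Z)))).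
  rewrite EZD !EZMl !EZ_coord_indep => [| Z | Z]; try by rewrite exposure_flip.
  rewrite !EZ_bool_fun /coord_pmf /treat_prob iRe mulr1.
  by field; rewrite pz_neq0 pzC_neq0.
by move=> Z; rewrite /ipw_contrast obs_outcomeE; case: (Z i) => /=; ring.
Qed.

Hypotheses (Ra_disj : [disjoint Ra & Re]) (e_ego : forall j, j \in Ra -> e j \in Re).
Hypothesis e_edge : forall j, j \in Ra -> A j (e j).

Lemma EZ_IE_hat_term i : i \in Ra ->
  E (fun Z => ipw_contrast (exposure (obs_adj Ra e) Z i) (obs_outcome Y A Z i))
  = (Y i false true - Y i false false)
    + (pz - PrZ pz Re (F i)) / (1 - pz) * (Y i false true - Y i false false).
Proof.
move=> iRa.
have iNRe : i \notin Re by rewrite (disjointFr Ra_disj iRa).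
have eii : e i != i by apply: contraNneq iNRe => <-; apply: e_ego.
rewrite (eq_EZ_on_support pz (W := fun Z =>
    (Y i false true / pz + Y i false true / (1 - pz)) * (Z (e i))%:R
    + (- (1 - pz)^-1) * Y i false (F i Z))).
  rewrite EZD !EZMl EZ_coord EZ_bool_fun /treat_prob e_ego // mulr1.
  by field; rewrite pz_neq0 pzC_neq0.
move=> Z offRe.
rewrite /ipw_contrast obs_outcomeE (exposure_obs_adj_alter Z e_ego iRa iNRe).
rewrite (negbTE (offRe i iNRe)).
case Zei: (Z (e i)).
  rewrite (exposure_neighbour eii (e_edge iRa) Zei) /=.
  by field; rewrite pz_neq0 pzC_neq0.
by rewrite /=; ring.
Qed.

End HorvitzThompsonTerms.

Theorem proposition1 (R : realFieldType) (N : nat)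
    (A : 'I_N -> 'I_N -> bool) (Re Ra : {set 'I_N}) (e : 'I_N -> 'I_N)
    (pz : R) (Y : 'I_N -> bool -> bool -> R)
    (Asym : forall i j, A i j = A j i)
    (Airr : forall i, A i i = false)
    (Re_ne : Re != set0) (Ra_ne : Ra != set0)
    (Ra_disj : [disjoint Ra & Re])
    (e_ego : forall j, j \in Ra -> e j \in Re)
    (e_edge : forall j, j \in Ra -> A j (e j))
    (pz_gt0 : 0 < pz) (pz_lt1 : pz < 1) :
  EZ pz Re (fun Z => IE_hat pz Ra e Y A Z)
    = IE Ra Y + (#|Ra|%:R)^-1 * \sum_(i in Ra)
        ((pz - PrZ pz Re (fun Z => exposure A Z i)) / (1 - pz)
         * (Y i false true - Y i false false))
  /\
  EZ pz Re (fun Z => DE_hat pz Re Y A Z)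
    = DE Re Y + (#|Re|%:R)^-1 * \sum_(i in Re)
        (PrZ pz Re (fun Z => exposure A Z i)
         * ((Y i true true - Y i false true) - (Y i true false - Y i false false))).
Proof.
split.
- rewrite /IE_hat /IE EZMl EZ_sum -mulrDr -big_split /=; congr (_ * _).
  by apply: eq_bigr => i iRa; apply: EZ_IE_hat_term.
- rewrite /DE_hat /DE EZMl EZ_sum -mulrDr -big_split /=; congr (_ * _).
  by apply: eq_bigr => i iRe; apply: EZ_DE_hat_term.
Qed.
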